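(* There exist finite category presentations $D$ and $E$ and a profunctor $\mathcal Q:[\![D]\!]\nrightarrow[\![E]\!]$ which is finitely uncurried presentable but not finitely curried presentable.
   Context: Category presentation $C$: sorts, function symbols $f:c\to c'$, set $C_E$ of equations between parallel paths (paths are composable lists $f_0.\cdots.f_{n-1}$ of function symbols or empty paths $1_c$); finite if these sets are finite. $\approx_C$: smallest equivalence relation on paths containing $C_E$ closed under concatenation with composable function symbols on either side; $[\![C]\!]$: objects sorts, morphisms $\approx_C$-classes $[p]$ of paths. Profunctors $\mathcal P:\mathcal C\nrightarrow\mathcal D$: categories over $\mathbf 2=\{0\to 1\}$ with fibres $\mathcal C,\mathcal D$; equivalently functors $\mathcal C^{op}\times\mathcal D\to\mathbf{Set}$, $\mathcal P(c,d)$ being the cross-morphisms $c\to d$. Isomorphism is taken in $\mathbf{Prof}(\mathcal C,\mathcal D)$ (functors over $\mathbf 2$ that are identities on $\mathcal C,\mathcal D$). Uncurried presentation $P:C\nrightarrow D$: a set $\mathrm{Fun}(P)$ of symbols $x:c\to d$ ($c\in\mathrm{Sort}(C)$, $d\in\mathrm{Sort}(D)$) and a set $P_E$ of equations between cross-paths (paths from a $C$-sort to a $D$-sort) of the category presentation $|P|$ with sorts $\mathrm{Sort}(C)+\mathrm{Sort}(D)$, symbols $\mathrm{Fun}(C)+\mathrm{Fun}(P)+\mathrm{Fun}(D)$, equations $C_E+P_E+D_E$. Finite if $C,D,\mathrm{Fun}(P),P_E$ are finite. Semantics $[\![P]\!]=[\![|P|]\!]$ over $\mathbf 2$. $\mathcal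 P$ is finitely uncurried presentable if $\mathcal P\cong[\![P]\!]$ for some finite uncurried $P:C\nrightarrow D$. Instance presentations: $1$ is the category presentation with one sort $*$ and no function symbols or equations. A $C$-instance presentation $I$ is an uncurried presentation $1\nrightarrow C$; its symbols $x:*\to c$ are called generators, written $x:c$; its cross-paths are terms, each of the form $x.g$ with $x$ a generator and $g$ a $C$-path. Finite if $\mathrm{Gen}(I)$ and $I_E$ are finite. $[\![I]\!]:[\![C]\!]\to\mathbf{Set}$ sends $c$ to the set of $\approx_I$-classes of terms of type $c$, with $[g]$ acting by $[t]\mapsto[t.g]$. A morphism $F:I\to J$ of $C$-instance presentations maps each generator $x:c$ of $I$ to a term $F(x):c$ of $J$ such that $F(x).g\approx_J F(y).h$ for every equation $x.g=y.h$ of $I_E$; it acts on terms by $F(x.g):=F(x).g$; and $F\approx G$ iff $F(x)\approx_J G(x)$ for all generators. Curried presentations: a curried profunctor presentation $P:C\nrightarrow D$ assigns to each sort $c$ of $C$ a $D$-instance presentation $P(c)$ and to each function symbol $f:c\to c'$ of $C$ a $D$-instance morphism $P(f):P(c')\to P(c)$, such that $P(p)\approx P(p')$ for each equation $p=p'$ of $C_E$, where $P(f_1.\cdots.f_n):=P(f_n)\circ\cdots\circ P(f_1)$ and $P(1_c)$ is the identity. It is finite if $C$, $D$ and all $P(c)$ are finite. Its semantics is the profunctor $[\![P]\!]:[\![C]\!]\nrightarrow[\![D]\!]$ with $[\![P]\!](c,d)=[\![P(c)]\!](d)$ and $[f]$ acting via $[\![P(f)]\!]$. $\mathcal P$ is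 finitely curried presentable if $\mathcal P\cong[\![P]\!]$ for some finite curried $P:C\nrightarrow D$. *)

From Stdlib Require Import List.
Set Implicit Arguments.

Record Sig := { Sort : Type; Fn : Type; src : Fn -> Sort; tgt : Fn -> Sort }.

(** A path [f_0. ... .f_{n-1}] from [a] to [b] (diagrammatic order);
    [pnil] is the empty path [1_a]. *)
Inductive path (S : Sig) : Sort S -> Sort S -> Type :=
| pnil : forall a, path S a a
| pcons : forall (f : Fn S) b, path S (tgt S f) b -> path S (src S f) b.
Arguments pnil {S a}.
Arguments pcons {S} f {b} p.

Fixpoint papp {S : Sig} {a b c} (p : path S a b) : path S b c -> path S a c :=
  match p in path _ a b return path S b c -> path S a c with
  | pnil => fun q => q
  | pcons f p' => fun q => pcons f (papp p' q)
  end.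

Record CatPres := {
  csig :> Sig;
  Eqn : Type;
  eq_src : Eqn -> Sort csig;
  eq_tgt : Eqn -> Sort csig;
  eq_lhs : forall e, path csig (eq_src e) (eq_tgt e);
  eq_rhs : forall e, path csig (eq_src e) (eq_tgt e) }.

Inductive peq (C : CatPres) : forall a b : Sort C, path C a b -> path C a b -> Prop :=
| peq_eqn : forall e, peq C (eq_lhs C e) (eq_rhs C e)
| peq_refl : forall a b (p : path C a b), peq C p p
| peq_sym : forall a b (p q : path C a b), peq C p q -> peq C q p
| peq_trans : forall a b (p q r : path C a b), peq C p q -> peq C q r -> peq C p r
| peq_pre : forall (f : Fn C) b (p q : path C (tgt C f) b),
    peq C p q -> peq C (pcons f p) (pcons f q)
| peq_post : forall (f : Fn C) a (p q : path C a (src C f)),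
    peq C p q -> peq C (papp p (pcons f pnil)) (papp q (pcons f pnil)).

Definition fin (T : Type) : Prop := exists l : list T, forall x : T, In x l.

Definition fin_cat (C : CatPres) : Prop :=
  fin (Sort C) /\ fin (Fn C) /\ fin (Eqn C).

(** A profunctor is given by its sets of cross-morphisms [el c d] (as setoids,
    with equality [eqv]), with actions of C-paths on the left and D-paths on
    the right, which must respect ≈ (so they are actions of the morphisms of
    [[C]], [[D]]) and be functorial. *)
Record ProfData (C D : CatPres) := {
  el : Sort C -> Sort D -> Type;
  eqv : forall c d, el c d -> el c d -> Prop;
  lact : forall c' c d, path C c' c -> el c d -> el c' d;
  ract : forall c d d', el c d -> path D d d' -> el c d' }.
Arguments el {C D} _ _ _.
Arguments eqv {C D} _ {c d} _ _.
Arguments lact {C D} _ {c' c d} _ _.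
Arguments ract {C D} _ {c d d'} _ _.

Definition IsProf (C D : CatPres) (Q : ProfData C D) : Prop :=
  (forall c d (x : el Q c d), eqv Q x x) /\
  (forall c d (x y : el Q c d), eqv Q x y -> eqv Q y x) /\
  (forall c d (x y z : el Q c d), eqv Q x y -> eqv Q y z -> eqv Q x z) /\
  (forall c' c d (p p' : path C c' c) (x x' : el Q c d),
      peq C p p' -> eqv Q x x' -> eqv Q (lact Q p x) (lact Q p' x')) /\
  (forall c d d' (x x' : el Q c d) (q q' : path D d d'),
      eqv Q x x' -> peq D q q' -> eqv Q (ract Q x q) (ract Q x' q')) /\
  (forall c d (x : el Q c d), eqv Q (lact Q pnil x) x) /\
  (forall c d (x : el Q c d), eqv Q (ract Q x pnil) x) /\
  (forall c'' c' c d (p : path C c'' c') (p' : path C c' c) (x : el Q c d),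
      eqv Q (lact Q (papp p p') x) (lact Q p (lact Q p' x))) /\
  (forall c d d' d'' (x : el Q c d) (q : path D d d') (q' : path D d' d''),
      eqv Q (ract Q x (papp q q')) (ract Q (ract Q x q) q')) /\
  (forall c' c d d' (p : path C c' c) (x : el Q c d) (q : path D d d'),
      eqv Q (lact Q p (ract Q x q)) (ract Q (lact Q p x) q)).

Definition ProfIso (C D : CatPres) (P Q : ProfData C D) : Prop :=
  exists (F : forall c d, el P c d -> el Q c d) (G : forall c d, el Q c d -> el P c d),
    (forall c d (x x' : el P c d), eqv P x x' -> eqv Q (F c d x) (F c d x')) /\
    (forall c d (y y' : el Q c d), eqv Q y y' -> eqv P (G c d y) (G c d y')) /\
    (forall c d (x : el P c d), eqv P (G c d (F c d x)) x) /\
    (forall c d (y : el Q c d), eqv Q (F c d (G c d y)) y) /\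
    (forall c' c d (p : path C c' c) (x : el P c d),
        eqv Q (F c' d (lact P p x)) (lact Q p (F c d x))) /\
    (forall c d d' (x : el P c d) (q : path D d d'),
        eqv Q (F c d' (ract P x q)) (ract Q (F c d x) q)).

Record UncSig (C D : Sig) := {
  PFun : Type; pf_src : PFun -> Sort C; pf_tgt : PFun -> Sort D }.

Definition tot_sig (C D : Sig) (P : UncSig C D) : Sig := {|
  Sort := (Sort C + Sort D)%type;
  Fn := (Fn C + (PFun P + Fn D))%type;
  src := fun f => match f with
                  | inl g => inl (src C g)
                  | inr (inl x) => inl (pf_src P x)
                  | inr (inr h) => inr (src D h) end;
  tgt := fun f => match f with
                  | inl g => inl (tgt C g)
                  | inr (inl x) => inr (pf_tgt P x)
                  | inr (inr h) => inr (tgt D h) end |}.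

Fixpoint embL (C D : Sig) (P : UncSig C D) a b (p : path C a b)
  : path (tot_sig P) (inl a) (inl b) :=
  match p in path _ a b return path (tot_sig P) (inl a) (inl b) with
  | pnil => pnil
  | pcons f p' => @pcons (tot_sig P) (inl f) _ (embL P p')
  end.

Fixpoint embR (C D : Sig) (P : UncSig C D) a b (p : path D a b)
  : path (tot_sig P) (inr a) (inr b) :=
  match p in path _ a b return path (tot_sig P) (inr a) (inr b) with
  | pnil => pnil
  | pcons f p' => @pcons (tot_sig P) (inr (inr f)) _ (embR P p')
  end.

Record UncPres (C D : CatPres) := {
  usig :> UncSig C D;
  PEqn : Type;
  pe_src : PEqn -> Sort C;
  pe_tgt : PEqn -> Sort D;
  pe_lhs : forall e, path (tot_sig usig) (inl (pe_src e)) (inr (pe_tgt e));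
  pe_rhs : forall e, path (tot_sig usig) (inl (pe_src e)) (inr (pe_tgt e)) }.

Definition tot_esrc (C D : CatPres) (P : UncPres C D)
  (e : Eqn C + (PEqn P + Eqn D)) : Sort (tot_sig P) :=
  match e with
  | inl e => inl (eq_src C e)
  | inr (inl e) => inl (pe_src P e)
  | inr (inr e) => inr (eq_src D e) end.

Definition tot_etgt (C D : CatPres) (P : UncPres C D)
  (e : Eqn C + (PEqn P + Eqn D)) : Sort (tot_sig P) :=
  match e with
  | inl e => inl (eq_tgt C e)
  | inr (inl e) => inr (pe_tgt P e)
  | inr (inr e) => inr (eq_tgt D e) end.

Definition tot_elhs (C D : CatPres) (P : UncPres C D) (e : Eqn C + (PEqn P + Eqn D))
  : path (tot_sig P) (tot_esrc P e) (tot_etgt P e) :=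
  match e as e0 return path (tot_sig P) (tot_esrc P e0) (tot_etgt P e0) with
  | inl e => embL P (eq_lhs C e)
  | inr (inl e) => pe_lhs P e
  | inr (inr e) => embR P (eq_lhs D e) end.

Definition tot_erhs (C D : CatPres) (P : UncPres C D) (e : Eqn C + (PEqn P + Eqn D))
  : path (tot_sig P) (tot_esrc P e) (tot_etgt P e) :=
  match e as e0 return path (tot_sig P) (tot_esrc P e0) (tot_etgt P e0) with
  | inl e => embL P (eq_rhs C e)
  | inr (inl e) => pe_rhs P e
  | inr (inr e) => embR P (eq_rhs D e) end.

Definition tot_pres (C D : CatPres) (P : UncPres C D) : CatPres := {|
  csig := tot_sig P;
  Eqn := (Eqn C + (PEqn P + Eqn D))%type;
  eq_src := tot_esrc P; eq_tgt := tot_etgt P;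
  eq_lhs := tot_elhs P; eq_rhs := tot_erhs P |}.

Definition fin_unc (C D : CatPres) (P : UncPres C D) : Prop :=
  fin_cat C /\ fin_cat D /\ fin (PFun P) /\ fin (PEqn P).

(** [[P]] = [[|P|]] over 2: cross-morphisms are ≈_{|P|}-classes of cross-paths. *)
Definition unc_sem (C D : CatPres) (P : UncPres C D) : ProfData C D := {|
  el := fun c d => path (tot_sig P) (inl c) (inr d);
  eqv := fun c d => @peq (tot_pres P) (inl c) (inr d);
  lact := fun c' c d p x => papp (embL P p) x;
  ract := fun c d d' x q => papp x (embR P q) |}.

Definition FinUncPresentable (C D : CatPres) (Q : ProfData C D) : Prop :=
  exists P : UncPres C D, fin_unc P /\ ProfIso (unc_sem P) Q.

Definition one_sig : Sig := {|
  Sort := unit; Fn := Empty_set;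
  src := fun e => match e with end; tgt := fun e => match e with end |}.
Definition one : CatPres := {|
  csig := one_sig; Eqn := Empty_set;
  eq_src := fun e => match e with end; eq_tgt := fun e => match e with end;
  eq_lhs := fun e => match e with end; eq_rhs := fun e => match e with end |}.

Definition Inst (D : CatPres) := UncPres one D.

Definition term (D : CatPres) (I : Inst D) (d : Sort D) :=
  path (tot_sig I) (inl tt) (inr d).

Definition fin_inst (D : CatPres) (I : Inst D) : Prop := fin (PFun I) /\ fin (PEqn I).

Fixpoint psubst (S T : Sig) (ms : Sort S -> Sort T)
  (sg : forall f : Fn S, path T (ms (src S f)) (ms (tgt S f))) a b (p : path S a b)
  : path T (ms a) (ms b) :=
  match p in path _ a b return path T (ms a) (ms b) with
  | pnil => pnil
  | pcons f p' => papp (sg f) (psubst ms sg p')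
  end.

Definition InstMor (D : CatPres) (I J : Inst D) :=
  forall x : PFun I, term J (pf_tgt I x).

Definition inst_ms (D : CatPres) (J : Inst D) (s : Sort (tot_sig J)) : Sort (tot_sig J) :=
  match s with inl _ => inl tt | inr d => inr d end.

Definition mor_sigma (D : CatPres) (I J : Inst D) (F : InstMor I J)
  (f : Fn (tot_sig I))
  : path (tot_sig J) (inst_ms J (src (tot_sig I) f)) (inst_ms J (tgt (tot_sig I) f)) :=
  match f as f0 return
        path (tot_sig J) (inst_ms J (src (tot_sig I) f0)) (inst_ms J (tgt (tot_sig I) f0)) with
  | inl e => match e with end
  | inr (inl x) => F x
  | inr (inr h) => @pcons (tot_sig J) (inr (inr h)) _ pnil
  end.

(** Action of F on terms: F(x.g) := F(x).g *)
Definition mor_app (D : CatPres) (I J : Inst D) (F : InstMor I J) u d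
  (t : path (tot_sig I) (inl u) (inr d)) : term J d :=
  @psubst (tot_sig I) (tot_sig J) (inst_ms J) (mor_sigma F) (inl u) (inr d) t.

Definition mor_valid (D : CatPres) (I J : Inst D) (F : InstMor I J) : Prop :=
  forall e : PEqn I, peq (tot_pres J) (mor_app F (pe_lhs I e)) (mor_app F (pe_rhs I e)).

Definition mor_eqv (D : CatPres) (I J : Inst D) (F G : InstMor I J) : Prop :=
  forall x : PFun I, peq (tot_pres J) (F x) (G x).

Definition gen_term (D : CatPres) (I : Inst D) (x : PFun I) : term I (pf_tgt I x) :=
  match pf_src I x as u return
        path (tot_sig I) (inl u) (inr (pf_tgt I x)) -> term I (pf_tgt I x) with
  | tt => fun p => p
  end (@pcons (tot_sig I) (inr (inl x)) _ pnil).

Definition mor_id (D : CatPres) (I : Inst D) : InstMor I I := fun x => @gen_term D I x.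

(** [mor_comp G F] = G ∘ F (first F : I -> J, then G : J -> K) *)
Definition mor_comp (D : CatPres) (I J K : Inst D) (G : InstMor J K) (F : InstMor I J)
  : InstMor I K := fun x => mor_app G (F x).

Record CurPres (C D : CatPres) := {
  cP : Sort C -> Inst D;
  cPf : forall f : Fn C, InstMor (cP (tgt C f)) (cP (src C f)) }.

Fixpoint cPpath (C D : CatPres) (P : CurPres C D) a b (p : path C a b)
  : InstMor (cP P b) (cP P a) :=
  match p in path _ a b return InstMor (cP P b) (cP P a) with
  | pnil => mor_id _
  | pcons f p' => mor_comp (cPf P f) (cPpath P p')
  end.

Definition cur_valid (C D : CatPres) (P : CurPres C D) : Prop :=
  (forall f : Fn C, mor_valid (cPf P f)) /\
  (forall e : Eqn C, mor_eqv (cPpath P (eq_lhs C e)) (cPpath P (eq_rhs C e))).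

Definition fin_cur (C D : CatPres) (P : CurPres C D) : Prop :=
  fin_cat C /\ fin_cat D /\ forall c : Sort C, fin_inst (cP P c).

Definition cur_sem (C D : CatPres) (P : CurPres C D) : ProfData C D := {|
  el := fun c d => term (cP P c) d;
  eqv := fun c d => @peq (tot_pres (cP P c)) (inl tt) (inr d);
  lact := fun c' c d p t => mor_app (cPpath P p) t;
  ract := fun c d d' t q => papp t (embR (cP P c) q) |}.

Definition FinCurPresentable (C D : CatPres) (Q : ProfData C D) : Prop :=
  exists P : CurPres C D, cur_valid P /\ fin_cur P /\ ProfIso (cur_sem P) Q.

(** Let [D] present the free monoid on one endomorphism [f] of a single
    sort, let [E] be the trivial presentation [1], and let [Q] be ℕ with [f]
    acting as the successor. One generator [x] presents [Q] uncurried, since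
    the cross-paths are exactly the [f^n.x]. A curried presentation would
    need a finite [1]-instance whose terms correspond to ℕ; but [1] has no
    function symbols, so every term of an instance is a bare generator, and
    there are only finitely many of them. *)

From Stdlib Require Import List Lia FinFun Eqdep_dec.

Fixpoint plen {Sg : Sig} {a b} (p : path Sg a b) : nat :=
  match p with pnil => 0 | pcons _ p' => S (plen p') end.

Definition head {Sg : Sig} {a b} (p : path Sg a b) : option (Fn Sg) :=
  match p with pnil => None | pcons f _ => Some f end.

Lemma plen_papp Sg a b c (p : path Sg a b) (q : path Sg b c) :
  plen (papp p q) = plen p + plen q.
Proof. induction p; simpl; auto. Qed.

Lemma plen_pos Sg a b (p : path Sg a b) : a <> b -> plen p > 0.
Proof. destruct p; simpl; [congruence | lia]. Qed.

Lemma plen_head_None Sg a b (p : path Sg a b) : head p = None -> plen p = 0.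
Proof. destruct p; simpl; congruence. Qed.

Lemma plen_embL (C D : Sig) (P : UncSig C D) a b (p : path C a b) :
  plen (embL P p) = plen p.
Proof. induction p; simpl; auto. Qed.

Lemma plen_embR_one (C : Sig) (P : UncSig C one) a b (q : path one a b) :
  plen (embR P q) = 0.
Proof. destruct q; [reflexivity | destruct f]. Qed.

Lemma peq_plen (C : CatPres) :
  (forall e, plen (eq_lhs C e) = plen (eq_rhs C e)) ->
  forall a b (p q : path C a b), peq C p q -> plen p = plen q.
Proof.
  intros Hlen a b p q E; induction E; simpl; auto; try congruence.
  rewrite !plen_papp; simpl; congruence.
Qed.

Section DecidableSorts.

Variable Sg : Sig.
Hypothesis Sort_eq_dec : forall a b : Sort Sg, {a = b} + {a <> b}.

Lemma path_plen0_eq a b (p q : path Sg a b) : plen p = 0 -> plen q = 0 -> p = q.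
Proof.
  assert (Hnil : forall (r : path Sg a b), plen r = 0 ->
            exists e : a = b, r = eq_rect a (path Sg a) pnil b e).
  { intros r; destruct r; simpl; [now exists eq_refl | discriminate]. }
  intros Hp Hq.
  destruct (Hnil p Hp) as [e ->], (Hnil q Hq) as [e' ->].
  now rewrite (UIP_dec Sort_eq_dec e e').
Qed.

Lemma path_head_cons (f : Fn Sg) b (q : path Sg (src Sg f) b) :
  head q = Some f -> exists q', q = pcons f q'.
Proof.
  enough (H : forall s (r : path Sg s b) (e : s = src Sg f), head r = Some f ->
            exists q', eq_rect s (fun s => path Sg s b) r _ e = pcons f q')
    by exact (H _ q eq_refl).
  intros s r e; destruct r as [a | g c r]; simpl; [discriminate |].
  intros Hg; injection Hg as ->.
  rewrite (UIP_dec Sort_eq_dec e eq_refl).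
  now exists r.
Qed.

End DecidableSorts.

Lemma unit_sum_eq_dec (x y : unit + unit) : {x = y} + {x <> y}.
Proof. decide equality; left; match goal with |- ?u = ?v => now destruct u, v end. Qed.

Lemma inst_one_plen_from_inr (I : Inst one) a t
  (p : path (tot_sig I) (inr a) t) : plen p = 0.
Proof.
  change (match (inr a : Sort (tot_sig I)) with inr _ => plen p = 0 | inl _ => True end).
  revert p; generalize (inr a : Sort (tot_sig I)); intros s p.
  destruct p as [s | f b p]; [now destruct s |].
  now destruct f as [[] | [x | []]].
Qed.

(** Without function symbols in [1], a path of [|I|] is a generator followed
    by nothing, so it is determined by its first symbol. *)
Lemma inst_one_path_eq_of_head (I : Inst one) s t (p q : path (tot_sig I) s t) :
  head p = head q -> p = q.
Proof.
  revert q; destruct p as [a | f b p]; intros q Hq.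
  - apply (path_plen0_eq (tot_sig I) unit_sum_eq_dec); [reflexivity |].
    now apply plen_head_None.
  - destruct (path_head_cons (tot_sig I) unit_sum_eq_dec f b q (eq_sym Hq)) as [q' ->].
    destruct f as [[] | [x | []]].
    f_equal; apply (path_plen0_eq (tot_sig I) unit_sum_eq_dec); apply inst_one_plen_from_inr.
Qed.

Lemma fin_empty : fin Empty_set.
Proof. now exists nil. Qed.

Lemma fin_unit : fin unit.
Proof. exists (tt :: nil); intros []; now left. Qed.

Lemma fin_sum A B : fin A -> fin B -> fin (A + B).
Proof.
  intros [la Ha] [lb Hb]; exists (map inl la ++ map inr lb).
  intros [x | y]; apply in_or_app; [left | right]; now apply in_map.
Qed.

Lemma fin_option A : fin A -> fin (option A).
Proof.
  intros [l Hl]; exists (None :: map Some l).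
  intros [x |]; [right; now apply in_map | now left].
Qed.

Lemma fin_tot_fn (C D : Sig) (P : UncSig C D) :
  fin (Fn C) -> fin (PFun P) -> fin (Fn D) -> fin (Fn (tot_sig P)).
Proof. intros; simpl; now repeat apply fin_sum. Qed.

Lemma fin_cat_one : fin_cat one.
Proof. repeat split; first [apply fin_unit | apply fin_empty]. Qed.

Lemma fin_not_injective_nat {T} (h : nat -> T) : fin T -> ~ Injective h.
Proof.
  intros [l Hl] Hh.
  assert (Hlen := NoDup_incl_length
                    (Injective_map_NoDup Hh (seq_NoDup (S (length l)) 0))
                    (l' := l) (fun y _ => Hl y)).
  rewrite length_map, length_seq in Hlen; lia.
Qed.

Definition loop_sig : Sig :=
  {| Sort := unit; Fn := unit; src := fun _ => tt; tgt := fun _ => tt |}.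

Definition loop : CatPres := {|
  csig := loop_sig; Eqn := Empty_set;
  eq_src := fun e => match e with end; eq_tgt := fun e => match e with end;
  eq_lhs := fun e => match e with end; eq_rhs := fun e => match e with end |}.

Lemma fin_cat_loop : fin_cat loop.
Proof. repeat split; first [apply fin_unit | apply fin_empty]. Qed.

Definition nat_prof : ProfData loop one := {|
  el := fun _ _ => nat;
  eqv := fun _ _ => @eq nat;
  lact := fun _ _ _ p n => plen p + n;
  ract := fun _ _ _ n _ => n |}.

Lemma nat_prof_IsProf : IsProf nat_prof.
Proof.
  assert (Hpeq := peq_plen loop (fun e => match e with end)).
  unfold IsProf; simpl; repeat split; intros; subst; auto; try congruence.
  rewrite plen_papp; lia.
Qed.

Definition nat_unc : UncPres loop one := {|
  usig := @Build_UncSig loop one unit (fun _ => tt) (fun _ => tt);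
  PEqn := Empty_set;
  pe_src := fun e => match e with end; pe_tgt := fun e => match e with end;
  pe_lhs := fun e => match e with end; pe_rhs := fun e => match e with end |}.

Fixpoint loop_pow (n : nat) : path loop_sig tt tt :=
  match n with 0 => pnil | S n => @pcons loop_sig tt tt (loop_pow n) end.

Definition loop_term (c d : unit) (n : nat) : path (tot_sig nat_unc) (inl c) (inr d) :=
  match c, d with
  | tt, tt => papp (embL nat_unc (loop_pow n))
                   (@pcons (tot_sig nat_unc) (inr (inl tt)) (inr tt) pnil)
  end.

Lemma plen_loop_term n : plen (loop_term tt tt n) = S n.
Proof. simpl; rewrite plen_papp, plen_embL; simpl; induction n; simpl; lia. Qed.

Lemma loop_cross_path_eq (p : path (tot_sig nat_unc) (inl tt) (inr tt)) :
  p = loop_term tt tt (pred (plen p)).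
Proof.
  enough (H : forall s t (r : path (tot_sig nat_unc) s t),
            match s, t return path (tot_sig nat_unc) s t -> Prop with
            | inl tt, inr tt => fun r => r = loop_term tt tt (pred (plen r))
            | inr _, _ => fun r => plen r = 0
            | _, _ => fun _ => True
            end r) by exact (H _ _ p).
  induction r as [a | f b r IH]; [now destruct a as [[] | []] |].
  destruct f as [[] | [[] | []]], b as [[] | []]; cbn -[loop_term] in *; auto.
  - now rewrite IH, plen_loop_term.
  - now rewrite (path_plen0_eq (tot_sig nat_unc) unit_sum_eq_dec _ _ r pnil IH eq_refl).
Qed.

Lemma nat_prof_FinUncPresentable : FinUncPresentable nat_prof.
Proof.
  exists nat_unc; split.
  { repeat split; first [apply fin_unit | apply fin_empty]. }
  exists (fun _ _ p => pred (plen p)), loop_term; cbn -[loop_term].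
  repeat split.
  - intros c d x x' Hx; f_equal.
    now apply (peq_plen (tot_pres nat_unc)) in Hx; [| intros [[] | [[] | []]]].
  - intros c d n n' <-; apply peq_refl.
  - intros [] [] x; rewrite (loop_cross_path_eq x) at 2; apply peq_refl.
  - intros [] [] n; now rewrite plen_loop_term.
  - intros c' c d p x.
    assert (plen x > 0) by (apply plen_pos; discriminate).
    rewrite plen_papp, plen_embL; lia.
  - intros c d d' x q; rewrite plen_papp, plen_embR_one; lia.
Qed.

Lemma nat_prof_not_FinCurPresentable : ~ FinCurPresentable nat_prof.
Proof.
  intros [P [_ [[_ [_ Hfin]] [F [G [_ [_ [_ [HFG _]]]]]]]]]; simpl in *.
  apply (fin_not_injective_nat (fun n => head (G tt tt n))).
  - apply fin_option, fin_tot_fn; [apply fin_empty | apply (Hfin tt) | apply fin_empty].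
  - intros n m Hnm.
    apply inst_one_path_eq_of_head in Hnm.
    now rewrite <- (HFG tt tt n), <- (HFG tt tt m), Hnm.
Qed.

Theorem mainTheorem7 :
  exists (D E : CatPres), fin_cat D /\ fin_cat E /\
    exists Q : ProfData D E,
      IsProf Q /\ FinUncPresentable Q /\ ~ FinCurPresentable Q.
Proof.
  exists loop, one; split; [apply fin_cat_loop |].
  split; [apply fin_cat_one |].
  exists nat_prof; split; [apply nat_prof_IsProf |].
  split; [apply nat_prof_FinUncPresentable | apply nat_prof_not_FinCurPresentable].
Qed.
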